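(* Let $n\ge 3$, let $K$ be a field and $S_n$ as defined below. If $Q$ is a prime ideal of the monoid $S_n$, then $Q\supseteq a_1a_2\cdots a_nS_n$ and $K[Q]$ is a prime ideal of $K[S_n]$; moreover $K[S_n]/K[Q]$ is isomorphic to a prime monomial algebra.
   Context: For $n\ge 3$, $S_n$ denotes the monoid with generators $a_1,\dots,a_n$ and defining relations $a_1a_2\cdots a_n=a_{\sigma(1)}a_{\sigma(2)}\cdots a_{\sigma(n)}$ for all $\sigma$ in the cyclic subgroup of $\operatorname{Sym}_n$ generated by the cycle $(1,2,\dots,n)$. An ideal $Q\neq S$ of a monoid $S$ is prime if $aSb\subseteq Q$ with $a,b\in S$ implies $a\in Q$ or $b\in Q$. For an ideal $I$ of $S_n$, $K[I]$ denotes the $K$-linear span of $I$ in $K[S_n]$. A monomial algebra is a quotient of a free algebra $K\langle x_1,\dots,x_m\rangle$ by an ideal spanned by words. *)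

From HB Require Import structures.
From mathcomp Require Import all_boot all_order all_algebra.
Set Implicit Arguments. Unset Strict Implicit. Unset Printing Implicit Defensive.
Import GRing.Theory.
Local Open Scope ring_scope.

(* Words over the alphabet 'I_m are [seq 'I_m]; an element of the free
   algebra K<x_0..x_(m-1)> is represented by its coefficient function
   seq 'I_m -> K, required to have finite support (= bounded degree,
   since 'I_m is finite). *)

Definition ncp (K : fieldType) (m : nat) := seq 'I_m -> K.

Definition fsupp (K : fieldType) m (f : ncp K m) : Prop :=
  exists N : nat, forall w : seq 'I_m, (N <= size w)%N -> f w = 0.

Definition pzero (K : fieldType) m : ncp K m := fun _ => 0.
Definition pone (K : fieldType) m : ncp K m := fun w => (w == [::])%:R.
Definition pmono (K : fieldType) m (u : seq 'I_m) : ncp K m :=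
  fun w => (w == u)%:R.
Definition padd (K : fieldType) m (f g : ncp K m) : ncp K m :=
  fun w => f w + g w.
Definition psub (K : fieldType) m (f g : ncp K m) : ncp K m :=
  fun w => f w - g w.
Definition pscale (K : fieldType) m (c : K) (f : ncp K m) : ncp K m :=
  fun w => c * f w.
Definition pmul (K : fieldType) m (f g : ncp K m) : ncp K m :=
  fun w => \sum_(i < (size w).+1) f (take i w) * g (drop i w).

Definition is_ideal (K : fieldType) m (I : ncp K m -> Prop) : Prop :=
  [/\ forall f, I f -> fsupp f,
      I (@pzero K m),
      forall f g, I f -> I g -> I (padd f g),
      forall c f, I f -> I (pscale c f)
    & forall f g, fsupp f -> I g -> I (pmul f g) /\ I (pmul g f)].

Definition prime_ideal (K : fieldType) m (I : ncp K m -> Prop) : Prop :=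
  [/\ is_ideal I,
      exists f, fsupp f /\ ~ I f
    & forall a b, fsupp a -> fsupp b ->
        (forall r, fsupp r -> I (pmul (pmul a r) b)) -> I a \/ I b].

(* generator a_(i+1) is i : 'I_n ; a_1 a_2 ... a_n is the word [enum 'I_n];
   a_(sigma 1) ... a_(sigma n) for sigma = (1 2 ... n)^k is [rot k (enum 'I_n)]. *)
Definition prodA (n : nat) : seq 'I_n := enum 'I_n.

Inductive Sn_equiv (n : nat) : seq 'I_n -> seq 'I_n -> Prop :=
| Sn_refl w : Sn_equiv w w
| Sn_step u v k k' w : Sn_equiv w (u ++ rot k (prodA n) ++ v) ->
                      Sn_equiv w (u ++ rot k' (prodA n) ++ v).

(* ideal of the monoid S_n, described by the set of words representing
   its elements; "Q <> S_n" and nonemptiness included *)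
Definition Sn_ideal (n : nat) (Q : seq 'I_n -> Prop) : Prop :=
  [/\ forall u v, Sn_equiv u v -> Q u -> Q v,
      forall w u v, Q w -> Q (u ++ w ++ v),
      exists w, Q w
    & exists w, ~ Q w].

Definition Sn_prime_ideal (n : nat) (Q : seq 'I_n -> Prop) : Prop :=
  Sn_ideal Q /\
  forall a b, (forall s, Q (a ++ s ++ b)) -> Q a \/ Q b.

(* J = ideal of K<x> spanned by u (a_1..a_n) v - u (a_sigma(1)..a_sigma(n)) v;
   K[S_n] is represented by K<x> modulo J. *)
Inductive relJ (K : fieldType) (n : nat) : ncp K n -> Prop :=
| relJ0 : relJ (@pzero K n)
| relJS f c u v k k' : relJ f ->
    relJ (padd f (pscale c (psub (@pmono K n (u ++ rot k (prodA n) ++ v))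
                                 (@pmono K n (u ++ rot k' (prodA n) ++ v))))).

Definition wspan (K : fieldType) m (W : seq 'I_m -> Prop) (f : ncp K m) : Prop :=
  fsupp f /\ forall w, ~ W w -> f w = 0.

(* preimage in K<x> of K[Q] subset K[S_n] : span(Q) + J *)
Definition KQ (K : fieldType) n (Q : seq 'I_n -> Prop) (f : ncp K n) : Prop :=
  fsupp f /\ exists g h, @wspan K n Q g /\ relJ h /\ forall w, f w = g w + h w.

(* W is an ideal of the free monoid (so that its span is the ideal of a
   monomial algebra) *)
Definition word_ideal m (W : seq 'I_m -> Prop) : Prop :=
  forall w u v, W w -> W (u ++ w ++ v).

(* phi induces a K-algebra isomorphism  K<x>/I1 ~= K<y>/I2 *)
Definition quot_iso (K : fieldType) n m (I1 : ncp K n -> Prop)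
    (I2 : ncp K m -> Prop) (phi : ncp K n -> ncp K m) : Prop :=
  (forall f, fsupp f -> fsupp (phi f)) /\
  [/\ forall c f g, fsupp f -> fsupp g ->
        I2 (psub (phi (padd (pscale c f) g)) (padd (pscale c (phi f)) (phi g))),
      forall f g, fsupp f -> fsupp g ->
        I2 (psub (phi (pmul f g)) (pmul (phi f) (phi g))),
      I2 (psub (phi (@pone K n)) (@pone K m)),
      forall f, fsupp f -> (I2 (phi f) <-> I1 f)
    & forall g, fsupp g -> exists f, fsupp f /\ I2 (psub (phi f) g)].

From mathcomp Require Import all_boot all_order all_algebra.
From mathcomp Require Import zify.
From Stdlib Require Import Classical FunctionalExtensionality PropExtensionality.
Import GRing.Theory.

Set Implicit Arguments.
Unset Strict Implicit.
Local Open Scope ring_scope.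

(* Write z = a_1 a_2 ... a_n.  In S_n every cyclic rotation of z equals z,
   which makes z central, and every word w is a factor of z^|w| (append the
   rotation of z that starts with the next letter).  If Q is a prime ideal,
   it contains some word w, hence z^|w|; since z is central, z s z^j lies in
   Q for every s whenever z^(j+1) does, so primeness peels off copies of z
   until z itself lies in Q.  Consequently every defining relation
   u z v - u rot_k(z) v of K[S_n] lies in the span of Q, so the preimage of
   K[Q] in the free algebra is exactly span(Q): K[S_n]/K[Q] is the monomial
   algebra K<x>/span(Q), via the identity map.  Finally, for any word ideal
   W that is prime in the free monoid, span(W) is a prime ideal: compare the
   coefficients of longest words outside W ("leading words") in a, b and
   a s b. *)

Section SnMonoid.
Variable n : nat.
Local Notation z := (prodA n).

Lemma Sn_trans (a b c : seq 'I_n) : Sn_equiv a b -> Sn_equiv b c -> Sn_equiv a c.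
Proof.
move=> Hab Hbc; elim: Hbc Hab => [//|u v k k' w _ IH] Hab.
exact: (Sn_step k' (IH Hab)).
Qed.

Lemma Sn_rot (u v : seq 'I_n) k k' :
  Sn_equiv (u ++ rot k z ++ v) (u ++ rot k' z ++ v).
Proof. exact: (Sn_step k' (Sn_refl _)). Qed.

Lemma Sn_sym (a b : seq 'I_n) : Sn_equiv a b -> Sn_equiv b a.
Proof.
elim=> [w|u v k k' w _ IH]; first exact: Sn_refl.
exact: Sn_trans (Sn_rot u v k' k) IH.
Qed.

Lemma Sn_cat (x y a b : seq 'I_n) :
  Sn_equiv a b -> Sn_equiv (x ++ a ++ y) (x ++ b ++ y).
Proof.
elim=> [w|u v k k' w _ IH]; first exact: Sn_refl.
have assoc k0 : x ++ (u ++ rot k0 z ++ v) ++ y = (x ++ u) ++ rot k0 z ++ (v ++ y).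
  by rewrite !catA.
rewrite assoc; apply: (Sn_step k'); rewrite -assoc; exact: IH.
Qed.

Lemma Sn_catl (x a b : seq 'I_n) : Sn_equiv a b -> Sn_equiv (x ++ a) (x ++ b).
Proof. by move/(Sn_cat x [::]); rewrite !cats0. Qed.

Lemma Sn_catr (y a b : seq 'I_n) : Sn_equiv a b -> Sn_equiv (a ++ y) (b ++ y).
Proof. exact: (Sn_cat [::] y). Qed.

Lemma rot_prodA (y : 'I_n) : rot y z = y :: (drop y.+1 z ++ take y z).
Proof.
have y_lt : (y < size z)%N by rewrite size_enum_ord.
by rewrite /rot (drop_nth y y_lt) nth_ord_enum.
Qed.

Lemma rot_prodA_succ (y : 'I_n) : [:: y] ++ rot y.+1 z = rot y z ++ [:: y].
Proof.
have y_lt : (y < size z)%N by rewrite size_enum_ord.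
by rewrite rot_prodA /rot (take_nth y y_lt) nth_ord_enum -cats1 !catA.
Qed.

(* Each letter commutes with z: rotate z one step past the letter. *)
Lemma Sn_letter_central (y : 'I_n) : Sn_equiv (y :: z) (z ++ [:: y]).
Proof.
have to_succ := Sn_rot [:: y] [::] 0 y.+1.
have from_y := Sn_rot [::] [:: y] y 0.
rewrite rot0 !cats0 rot_prodA_succ in to_succ.
rewrite rot0 /= in from_y.
exact: Sn_trans to_succ from_y.
Qed.

Lemma Sn_central (x : seq 'I_n) : Sn_equiv (x ++ z) (z ++ x).
Proof.
elim: x => [|y x IH]; first by rewrite cats0; exact: Sn_refl.
have swap := Sn_catr x (Sn_letter_central y); rewrite -catA in swap.
exact: Sn_trans (Sn_catl [:: y] IH) swap.
Qed.

Definition prodA_pow (j : nat) : seq 'I_n := flatten (nseq j z).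

Lemma factor_of_prodA_pow (w : seq 'I_n) :
  exists a b, Sn_equiv (prodA_pow (size w)) (a ++ w ++ b).
Proof.
elim/last_ind: w => [|w y [a [b IH]]]; first by exists [::], [::]; exact: Sn_refl.
exists a, (drop y.+1 z ++ take y z ++ b).
rewrite size_rcons /prodA_pow /= -/(prodA_pow _).
apply: Sn_trans (Sn_catl z IH) _.
have move_z : Sn_equiv (z ++ a ++ w ++ b) (a ++ w ++ z ++ b).
  by have := Sn_catr b (Sn_sym (Sn_central (a ++ w))); rewrite -!catA.
have unfold_z := Sn_rot (a ++ w) b 0 y; rewrite rot0 rot_prodA -cat1s -!catA in unfold_z.
rewrite -cats1 -!catA; exact: Sn_trans move_z unfold_z.
Qed.

End SnMonoid.

Section PrimeIdealsOfSn.
Variables (n : nat) (Q : seq 'I_n -> Prop).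
Hypothesis Q_prime : Sn_prime_ideal Q.
Local Notation z := (prodA n).

(* If a power of z lies in Q then so does z: z s z^j = s z^(j+1) in S_n. *)
Lemma prime_pow_prodA j : Q (prodA_pow n j) -> Q z.
Proof.
case: Q_prime => [[Q_equiv Q_ideal _ _]] Q_split.
elim: j => [|j IH] Qpow.
  by have := Q_ideal [::] [::] z Qpow.
case: (Q_split z (prodA_pow n j)) => // s.
apply: (Q_equiv (s ++ z ++ prodA_pow n j)).
  by have := Sn_catr (prodA_pow n j) (Sn_central s); rewrite -!catA.
by have := Q_ideal _ s [::] Qpow; rewrite cats0.
Qed.

Lemma prime_contains_prodA s : Q (z ++ s).
Proof.
case: (Q_prime) => [[Q_equiv Q_ideal [w Qw] _]] _.
have [a [b pow_w]] := factor_of_prodA_pow w.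
have Qz : Q z.
  apply: (prime_pow_prodA (j := size w)).
  by apply: Q_equiv (Sn_sym pow_w) _; exact: Q_ideal.
by have := Q_ideal _ [::] s Qz.
Qed.

Lemma prime_contains_relations u v k : Q (u ++ rot k z ++ v).
Proof.
case: (Q_prime) => [[Q_equiv Q_ideal _ _]] _.
apply: (Q_equiv (u ++ rot 0 z ++ v)); first exact: Sn_rot.
by rewrite rot0; apply: Q_ideal; have := prime_contains_prodA [::]; rewrite cats0.
Qed.

End PrimeIdealsOfSn.

Section FiniteSupport.
Variables (K : fieldType) (m : nat).
Implicit Types f g : ncp K m.

Lemma fsupp0 f : (forall w, f w = 0) -> fsupp f.
Proof. by move=> f0; exists 0%N. Qed.

Lemma fsupp_add f g : fsupp f -> fsupp g -> fsupp (padd f g).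
Proof.
move=> [N1 f0] [N2 g0]; exists (maxn N1 N2) => w; rewrite geq_max => /andP[h1 h2].
by rewrite /padd f0 // g0 // addr0.
Qed.

Lemma fsupp_sub f g : fsupp f -> fsupp g -> fsupp (psub f g).
Proof.
move=> [N1 f0] [N2 g0]; exists (maxn N1 N2) => w; rewrite geq_max => /andP[h1 h2].
by rewrite /psub f0 // g0 // subrr.
Qed.

Lemma fsupp_scale c f : fsupp f -> fsupp (pscale c f).
Proof. by move=> [N f0]; exists N => w hw; rewrite /pscale f0 // mulr0. Qed.

Lemma fsupp_mono u : fsupp (@pmono K m u).
Proof.
exists (size u).+1 => w hw; rewrite /pmono.
by case: eqP hw => [->|_ _]; rewrite ?ltnn.
Qed.

Lemma fsupp_mul f g : fsupp f -> fsupp g -> fsupp (pmul f g).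
Proof.
move=> [N1 f0] [N2 g0]; exists (N1 + N2)%N => w hw.
rewrite /pmul big1 // => i _.
have [hi|hi] := leqP N1 i.
  by rewrite f0 ?mul0r // size_takel // -ltnS ltn_ord.
by rewrite g0 ?mulr0 // size_drop; lia.
Qed.

End FiniteSupport.

Lemma bounded_max (P : nat -> Prop) N l :
  P l -> (forall k, P k -> (k < N)%N) -> exists k, P k /\ forall k', P k' -> (k' <= k)%N.
Proof.
elim: N => [|N IH] Pl bounded; first by have := bounded l Pl.
case: (classic (P N)) => [PN|notPN]; first by exists N; split => // k /bounded.
apply: IH Pl _ => k Pk; have := bounded k Pk; rewrite ltnS leq_eqVlt.
by case/orP => // /eqP ek; rewrite ek in Pk.
Qed.

Section WordSpan.
Variables (K : fieldType) (m : nat) (W : seq 'I_m -> Prop).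
Implicit Types f g : ncp K m.

Lemma wspan0 f : (forall w, f w = 0) -> wspan W f.
Proof. by move=> f0; split; [exact: fsupp0 | move=> w _; exact: f0]. Qed.

Lemma wspan_add f g : wspan W f -> wspan W g -> wspan W (padd f g).
Proof.
move=> [Ff f0] [Fg g0]; split; first exact: fsupp_add.
by move=> w hw; rewrite /padd f0 // g0 // addr0.
Qed.

Lemma wspan_sub f g : wspan W f -> wspan W g -> wspan W (psub f g).
Proof.
move=> [Ff f0] [Fg g0]; split; first exact: fsupp_sub.
by move=> w hw; rewrite /psub f0 // g0 // subrr.
Qed.

Lemma wspan_scale c f : wspan W f -> wspan W (pscale c f).
Proof.
move=> [Ff f0]; split; first exact: fsupp_scale.
by move=> w hw; rewrite /pscale f0 // mulr0.
Qed.

Lemma wspan_mono u : W u -> wspan W (@pmono K m u).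
Proof.
move=> Wu; split; first exact: fsupp_mono.
by move=> w hw; rewrite /pmono; case: eqP => // e; rewrite e in hw.
Qed.

Hypothesis W_ideal : word_ideal W.

Lemma word_ideal_take w i : W (take i w) -> W w.
Proof. by move/(W_ideal [::] (drop i w)); rewrite /= cat_take_drop. Qed.

Lemma word_ideal_drop w i : W (drop i w) -> W w.
Proof. by move/(W_ideal (take i w) [::]); rewrite cats0 cat_take_drop. Qed.

Lemma wspan_ideal : is_ideal (@wspan K m W).
Proof.
split; [by move=> f [] | exact: wspan0 | exact: wspan_add | exact: wspan_scale |].
move=> f g Ff [Fg g0]; split; split; try exact: fsupp_mul.
- move=> w hw; rewrite /pmul big1 // => i _.
  by rewrite g0 ?mulr0 // => /word_ideal_drop.
- move=> w hw; rewrite /pmul big1 // => i _.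
  by rewrite g0 ?mul0r // => /word_ideal_take.
Qed.

Definition top_bound f (d : nat) : Prop :=
  forall x, ~ W x -> f x <> 0 -> (size x <= d)%N.

Lemma top_bound_mono s : top_bound (@pmono K m s) (size s).
Proof. by move=> x _; rewrite /pmono; case: eqP => [->|]. Qed.

(* Both factors of a word outside W lie outside W; their lengths add up. *)
Lemma top_bound_split f g d1 d2 x i :
  top_bound f d1 -> top_bound g d2 -> ~ W x ->
  f (take i x) * g (drop i x) <> 0 ->
  [/\ (size (take i x) <= d1)%N, (size (drop i x) <= d2)%N
    & size x = (size (take i x) + size (drop i x))%N].
Proof.
move=> bf bg Wx /eqP; rewrite mulf_eq0 negb_or => /andP[/eqP fx /eqP gx].
split; [apply: bf fx | apply: bg gx | by rewrite -size_cat cat_take_drop].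
- by move/word_ideal_take.
- by move/word_ideal_drop.
Qed.

Lemma top_bound_mul f g d1 d2 :
  top_bound f d1 -> top_bound g d2 -> top_bound (pmul f g) (d1 + d2).
Proof.
move=> bf bg x Wx; apply: contra_not_leq => long.
rewrite /pmul big1 // => i _; apply/eqP/negP => /negP/eqP nz.
have [h1 h2 hx] := top_bound_split bf bg Wx nz; lia.
Qed.

Lemma pmul_top_coef f g u v :
  top_bound f (size u) -> top_bound g (size v) -> ~ W (u ++ v) ->
  pmul f g (u ++ v) = f u * g v.
Proof.
move=> bf bg Wuv.
have u_lt : (size u < (size (u ++ v)).+1)%N by rewrite ltnS size_cat leq_addr.
rewrite /pmul (bigD1 (inord (size u))) //= inordK // take_size_cat //.
rewrite drop_size_cat // big1 ?addr0 // => i neq_i.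
apply/eqP/negP => /negP/eqP nz; move/negP: neq_i; apply.
have [h1 h2 hx] := top_bound_split bf bg Wuv nz.
have i_le : (i <= size (u ++ v))%N by rewrite -ltnS ltn_ord.
rewrite size_takel // in h1 hx; apply/eqP/val_inj; rewrite /= inordK //.
have := size_cat u v; lia.
Qed.

Lemma pmul_mono_top_coef a b u v s :
  top_bound a (size u) -> top_bound b (size v) -> ~ W (u ++ s ++ v) ->
  pmul (pmul a (@pmono K m s)) b (u ++ s ++ v) = a u * b v.
Proof.
move=> ba bb Wusv.
have Wus : ~ W (u ++ s) by move/(W_ideal [::] v); rewrite -catA.
have bas : top_bound (pmul a (@pmono K m s)) (size (u ++ s)).
  by rewrite size_cat; exact: (top_bound_mul ba (@top_bound_mono s)).
rewrite catA pmul_top_coef //; last by rewrite -catA.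
rewrite pmul_top_coef //; last exact: top_bound_mono.
by rewrite /pmono eqxx mulr1.
Qed.

Lemma leading_word f : fsupp f -> ~ wspan W f ->
  exists u, [/\ ~ W u, f u <> 0 & top_bound f (size u)].
Proof.
move=> [N f0] notin.
pose P l := exists x, [/\ size x = l, ~ W x & f x <> 0].
have [w [Ww fw]] : exists w, ~ W w /\ f w <> 0.
  apply: NNPP => none; apply: notin; split; first by exists N.
  by move=> w Ww; apply: NNPP => fw; apply: none; exists w.
have Pw : P (size w) by exists w.
have bounded k : P k -> (k < N)%N.
  by move=> [x [<- _ fx]]; rewrite ltnNge; apply/negP => /f0.
have [k [[u [<- Wu fu]] maxk]] := bounded_max Pw bounded.
by exists u; split => // x Wx fx; apply: maxk; exists x.
Qed.

Lemma wspan_prime : (exists w, ~ W w) ->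
  (forall a b, (forall s, W (a ++ s ++ b)) -> W a \/ W b) ->
  prime_ideal (@wspan K m W).
Proof.
move=> [w0 Ww0] W_prime; split; first exact: wspan_ideal.
  exists (@pmono K m [::]); split; first exact: fsupp_mono.
  have Wnil : ~ W [::] by move/(W_ideal [::] w0).
  by move=> [_ /(_ _ Wnil)]; rewrite /pmono eqxx => /eqP; rewrite oner_eq0.
move=> a b Fa Fb asb.
case: (classic (wspan W a)) => [|notin_a]; first by left.
case: (classic (wspan W b)) => [|notin_b]; first by right.
have [u [Wu au ba]] := leading_word Fa notin_a.
have [v [Wv bv bb]] := leading_word Fb notin_b.
have [s Wusv] : exists s, ~ W (u ++ s ++ v).
  by apply: not_all_ex_not => all_in; case: (W_prime u v all_in).
have [_ /(_ _ Wusv)] := asb _ (fsupp_mono K s).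
rewrite pmul_mono_top_coef // => /eqP; rewrite mulf_eq0.
by case/orP => /eqP.
Qed.

End WordSpan.

Lemma KQ_eq_wspan (K : fieldType) n (Q : seq 'I_n -> Prop) :
  (forall u v k, Q (u ++ rot k (prodA n) ++ v)) -> @KQ K n Q = @wspan K n Q.
Proof.
move=> Q_rel.
have J_in_span h : @relJ K n h -> wspan Q h.
  elim=> [|f c u v k k' _ IH]; first exact: wspan0.
  by apply: wspan_add => //; apply/wspan_scale/wspan_sub; exact: wspan_mono.
apply: functional_extensionality => f; apply: propositional_extensionality.
split=> [[_ [g [h [Qg [/J_in_span Qh fgh]]]]] | Qf].
  have -> : f = padd g h by apply: functional_extensionality.
  exact: wspan_add.
split; first by case: Qf.
exists f, (@pzero K n); split=> //; split; first exact: relJ0.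
by move=> w; rewrite /pzero addr0.
Qed.

Lemma quot_iso_id (K : fieldType) m (I : ncp K m -> Prop) :
  is_ideal I -> quot_iso I I id.
Proof.
case=> _ I0 _ _ _.
have I_sub_self f : I (psub f f).
  suff -> : psub f f = @pzero K m by [].
  by apply: functional_extensionality => w; rewrite /psub subrr.
split=> //; split=> // g Fg; by exists g.
Qed.

Theorem mainTheorem7 (K : fieldType) (n : nat) (Q : seq 'I_n -> Prop) :
  (3 <= n)%N -> Sn_prime_ideal Q ->
  [/\ forall s : seq 'I_n, Q (prodA n ++ s),
      prime_ideal (@KQ K n Q)
    & exists (m : nat) (W : seq 'I_m -> Prop) (phi : ncp K n -> ncp K m),
        [/\ word_ideal W,
            prime_ideal (@wspan K m W)
          & quot_iso (@KQ K n Q) (@wspan K m W) phi]].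
Proof.
move=> _ Q_prime.
have KQ_span := KQ_eq_wspan K (prime_contains_relations Q_prime).
have [[_ Q_ideal _ Q_proper] Q_split] := Q_prime.
have span_prime : prime_ideal (@wspan K n Q) by exact: wspan_prime.
split; first exact: prime_contains_prodA.
  by rewrite KQ_span.
exists n, Q, id; split=> //.
by rewrite KQ_span; apply: quot_iso_id; exact: wspan_ideal.
Qed.
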